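(* Let $C$ be an $n\times n$ matrix of non-negative integers, and let $0\le m\le n$. Suppose: - all entries in the first $m$ rows of $C$ are non-zero; - all entries in the last $n-m$ rows of $C$ are zero; - the first column of $C$ is $(d,\dots,d,0,\dots,0)^T$, with $m$ entries equal to $d$, where $d$ is the gcd of the non-zero entries of $C$. If $C$ has rank $1$, then $J_{nm}+C\sim_M J_{nm}+D$, where $D$ is the $n\times n$ matrix whose first $m$ rows have all entries equal to $d$ and whose last $n-m$ rows are zero.
   Context: $J_{nm}$ ($0\le m\le n$) is the $n\times n$ matrix whose $i$-th row, for $i\le m$, has a $1$ in position $i$ and $0$ elsewhere, and whose last $n-m$ rows consist entirely of $\infty$. Arithmetic convention: $\infty+a=\infty$. For an $X\times X$ matrix $A$ with entries in $\{0,1,2,\dots\}\cup\{\infty\}$, $G_A$ is the graph with vertex set $X$ and exactly $A(x,y)$ edges from $x$ to $y$. For matrices, $A\sim_M B$ means $G_A\sim_M G_B$. A graph may have multiple edges and loops. A source receives no edges, a sink emits no edges, and an infinite emitter emits infinitely many edges. A vertex is singular if it is a sink or infinite emitter, and regular otherwise. Move-equivalence $\sim_M$ is the smallest equivalence relation on graphs with finitely many vertices such that $G\sim_M E$ whenever $E$ is isomorphic to a graph obtained from $G$ by one of the following moves. (S) Delete a regular source together with the edges it emits. (R) For a regular vertex $u$ emitting exactly one edge $f$, with $r(f)\neq u$, and all of whose incoming edges have the same source $v$: delete $u$, $f$ and the edges into $u$, and add for each $e\in r^{-1}(u)$ an edge $[ef]$ from $v$ to $r(f)$. (O) Out-splitting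 at a non-sink $v$ along a partition $\mathcal E_1,\dots,\mathcal E_n$ of $s^{-1}(v)$ with at most one infinite part. Replace $v$ by $v^1,\dots,v^n$. Each edge $e$ into $v$ becomes copies $e^1,\dots,e^n$ with $r(e^i)=v^i$ and source $s(e)$, or source $v^j$ if $s(e)=v$ and $e\in\mathcal E_j$. An edge from $v$ to $w\neq v$ lying in $\mathcal E_i$ gets source $v^i$. (I) In-splitting at a regular non-source $v$ along a partition $\mathcal E_1,\dots,\mathcal E_n$ of $r^{-1}(v)$. Replace $v$ by $v^1,\dots,v^n$. Each edge $e$ out of $v$ becomes copies $e^1,\dots,e^n$ with $s(e^i)=v^i$ and range $r(e)$, or range $v^j$ if $r(e)=v$ and $e\in\mathcal E_j$. An edge into $v$ from $w\neq v$ lying in $\mathcal E_i$ gets range $v^i$. *)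

From HB Require Import structures.
From mathcomp Require Import all_boot all_algebra.

Set Implicit Arguments.
Unset Strict Implicit.
Unset Printing Implicit Defensive.

Record graph := Graph { gV : finType; gE : Type; gs : gE -> gV; gr : gE -> gV }.

Definition graph_iso (G H : graph) : Prop :=
  exists (fV : gV G -> gV H) (fE : gE G -> gE H),
    bijective fV /\ bijective fE /\
    (forall e, gs (fE e) = fV (gs e)) /\ (forall e, gr (fE e) = fV (gr e)).

Section Moves.
Variable G : graph.

Definition finite_edges (P : gE G -> Prop) : Prop :=
  exists (k : nat) (f : 'I_k -> gE G), forall e, P e -> exists i, f i = e.

Definition is_sink (v : gV G) := forall e, gs e <> v.
Definition is_source (v : gV G) := forall e, gr e <> v.
Definition inf_emitter (v : gV G) := ~ finite_edges (fun e => gs e = v).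
Definition regular (v : gV G) := ~ is_sink v /\ ~ inf_emitter v.

Record keptE (v : gV G) := KeptE { ke : gE G; ke_s : gs ke != v; ke_r : gr ke != v }.
Record intoE (u : gV G) := IntoE { ie : gE G; ie_r : gr ie = u }.

Definition del_vertex (v : gV G) : graph :=
  @Graph ({x : gV G | x != v} : finType) (keptE v)
    (fun e => exist _ (gs (ke e)) (ke_s e))
    (fun e => exist _ (gr (ke e)) (ke_r e)).

Definition S_move (H : graph) : Prop :=
  exists v : gV G, regular v /\ is_source v /\ graph_iso (del_vertex v) H.

(* (R): delete u and f, add an edge [ef] from v to r(f) for each e into u *)
Definition R_graph (u v : gV G) (f : gE G) (hv : v != u) (hf : gr f != u) : graph :=
  @Graph ({x : gV G | x != u} : finType) (keptE u + intoE u)%type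
    (fun e => match e with
              | inl e => exist _ (gs (ke e)) (ke_s e)
              | inr _ => exist _ v hv end)
    (fun e => match e with
              | inl e => exist _ (gr (ke e)) (ke_r e)
              | inr _ => exist _ (gr f) hf end).

Definition R_move (H : graph) : Prop :=
  exists (u v : gV G) (f : gE G) (hv : v != u) (hf : gr f != u),
    regular u /\ gs f = u /\ (forall e, gs e = u -> e = f) /\
    (forall e, gr e = u -> gs e = v) /\ graph_iso (@R_graph u v f hv hf) H.

(* vertex set after splitting v into v^0, ..., v^(n-1) *)
Definition split_vert (v : gV G) (n : nat) (w : gV G) (i : 'I_n)
  : ({x : gV G | x != v} + 'I_n)%type :=
  if @insub _ (fun x : gV G => x != v) _ w is Some w' then inl w' else inr i.

(* (O) out-splitting at v along the partition given by p : s^{-1}(v) -> 'I_n *)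
Definition out_split_graph (v : gV G) (n : nat) (p : gE G -> 'I_n) : graph :=
  @Graph (({x : gV G | x != v} + 'I_n)%type : finType)
    ({e : gE G | gr e != v} + ({e : gE G | gr e == v} * 'I_n))%type
    (fun e => match e with
              | inl e => split_vert v (gs (val e)) (p (val e))
              | inr (e, _) => split_vert v (gs (val e)) (p (val e)) end)
    (fun e => match e with
              | inl e => split_vert v (gr (val e)) (p (val e))
              | inr (_, i) => inr i end).

Definition O_move (H : graph) : Prop :=
  exists (v : gV G) (n : nat) (p : gE G -> 'I_n),
    ~ is_sink v /\
    (forall i, exists e, gs e = v /\ p e = i) /\
    (forall i j, ~ finite_edges (fun e => gs e = v /\ p e = i) ->
                 ~ finite_edges (fun e => gs e = v /\ p e = j) -> i = j) /\
    graph_iso (out_split_graph v p) H.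

(* (I) in-splitting at v along the partition given by p : r^{-1}(v) -> 'I_n *)
Definition in_split_graph (v : gV G) (n : nat) (p : gE G -> 'I_n) : graph :=
  @Graph (({x : gV G | x != v} + 'I_n)%type : finType)
    ({e : gE G | gs e != v} + ({e : gE G | gs e == v} * 'I_n))%type
    (fun e => match e with
              | inl e => split_vert v (gs (val e)) (p (val e))
              | inr (_, i) => inr i end)
    (fun e => match e with
              | inl e => split_vert v (gr (val e)) (p (val e))
              | inr (e, _) => split_vert v (gr (val e)) (p (val e)) end).

Definition I_move (H : graph) : Prop :=
  exists (v : gV G) (n : nat) (p : gE G -> 'I_n),
    regular v /\ ~ is_source v /\
    (forall i, exists e, gr e = v /\ p e = i) /\
    graph_iso (in_split_graph v p) H.

End Moves.

Definition move_step (G H : graph) : Prop :=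
  S_move G H \/ R_move G H \/ O_move G H \/ I_move G H.

Inductive move_eq : graph -> graph -> Prop :=
| me_step G H : move_step G H -> move_eq G H
| me_refl G : move_eq G G
| me_sym G H : move_eq G H -> move_eq H G
| me_trans G H K : move_eq G H -> move_eq H K -> move_eq G K.

Inductive ext := Fin of nat | Inf.

Definition ext_add (a b : ext) : ext :=
  match a, b with Fin x, Fin y => Fin (x + y) | _, _ => Inf end.

Definition edge_count (a : ext) : Type :=
  match a with Fin k => 'I_k | Inf => nat end.

Definition graph_of (n : nat) (A : 'M[ext]_n) : graph :=
  @Graph ('I_n : finType) {p : 'I_n * 'I_n & edge_count (A p.1 p.2)}
    (fun e => (tag e).1) (fun e => (tag e).2).

Definition ext_addmx (n : nat) (A B : 'M[ext]_n) : 'M[ext]_n :=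
  \matrix_(i, j) ext_add (A i j) (B i j).

Definition ext_of_mx (n : nat) (C : 'M[nat]_n) : 'M[ext]_n := map_mx Fin C.

Definition Jnm (n m : nat) : 'M[ext]_n :=
  \matrix_(i, j) if (i < m)%N then Fin (i == j :> nat) else Inf.

Definition gcd_nz (n : nat) (C : 'M[nat]_n) : nat :=
  \big[gcdn/0%N]_(ij : 'I_n * 'I_n | C ij.1 ij.2 != 0%N) C ij.1 ij.2.

Definition Dmx (n m d : nat) : 'M[nat]_n :=
  \matrix_(i, j) if (i < m)%N then d else 0%N.

(* Fix a row index [o < m].  As [C] has rank one and its first column is
   constant equal to [d] on the first [m] rows, those rows all equal one row
   [R] with positive entries divisible by [d] = gcd, and [R o = d].

   Adding column [u] of a graph matrix to a column [v <> u], while removing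
   one edge [u -> v], is a move-equivalence when [u] has a loop: out-split [u]
   into a copy [u0] carrying a single edge [u -> v] and a copy carrying the
   rest, then contract [u0] into [v] by in-splitting off its in-neighbours one
   at a time and applying (R).  In [J_nm + C] the vertex [o] has a loop, and
   column [o] is [d] plus that loop on the first [m] rows and infinite below,
   like every column; so adding it to column [y] raises [R y] by [d].  Undoing such additions
   brings [R] down to the constant row [d], i.e. to [J_nm + D]. *)

From mathcomp Require Import all_boot all_algebra.
From mathcomp Require Import zify.
From Stdlib Require Import Classical ClassicalEpsilon FunctionalExtensionality Eqdep_dec.

Set Implicit Arguments.
Unset Strict Implicit.
Unset Printing Implicit Defensive.

(** * Equipotence of types *)

Definition equipotent (A B : Type) :=
  exists (f : A -> B) (g : B -> A), cancel f g /\ cancel g f.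

Lemma equipotent_inj_surj A B (f : A -> B) :
  injective f -> (forall b, exists a, f a = b) -> equipotent A B.
Proof.
move=> f_inj f_surj.
pose g b := proj1_sig (constructive_indefinite_description _ (f_surj b)).
have gK : cancel g f by move=> b; rewrite /g; case: constructive_indefinite_description.
by exists f, g; split=> // a; apply: f_inj; rewrite gK.
Qed.

Lemma equipotent_refl A : equipotent A A.
Proof. by exists id, id. Qed.

Lemma equipotent_sym A B : equipotent A B -> equipotent B A.
Proof. by case=> f [g [fK gK]]; exists g, f. Qed.

Lemma equipotent_trans A B C : equipotent A B -> equipotent B C -> equipotent A C.
Proof.
case=> f [g [fK gK]] [f' [g' [fK' gK']]]; exists (f' \o f), (g \o g').
by split=> x /=; rewrite ?fK' ?fK ?gK ?gK'.
Qed.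

Lemma equipotent_sum A B A' B' :
  equipotent A A' -> equipotent B B' -> equipotent (A + B) (A' + B').
Proof.
case=> f [g [fK gK]] [f' [g' [fK' gK']]].
exists (fun z => match z with inl a => inl (f a) | inr b => inr (f' b) end).
exists (fun z => match z with inl a => inl (g a) | inr b => inr (g' b) end).
by split; case=> x /=; rewrite ?fK ?gK ?fK' ?gK'.
Qed.

Lemma equipotent_sum_empty A E : (E -> False) -> equipotent (A + E) A.
Proof.
move=> hE; exists (fun z => match z with inl a => a | inr e => match hE e with end end), inl.
by split=> //; case=> // e; case: (hE e).
Qed.

Lemma equipotent_sumC A B : equipotent (A + B) (B + A).
Proof.
exists (fun z => match z with inl a => inr a | inr b => inl b end).
exists (fun z => match z with inl a => inr a | inr b => inl b end).
by split; case.
Qed.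

Lemma equipotent_all_eq A B :
  equipotent A B -> (forall b b' : B, b = b') -> forall a a' : A, a = a'.
Proof. by case=> f [g [fK gK]] h a a'; rewrite -(fK a) -(fK a') (h (f a) (f a')). Qed.

Lemma equipotent_inhabited A B : equipotent A B -> A -> B.
Proof. by move=> h a; case: (constructive_indefinite_description _ h) => f _; exact: f a. Qed.

Lemma equipotent_empty T (R : pred T) E :
  (forall z, R z = false) -> (E -> False) -> equipotent {z | R z} E.
Proof.
move=> hR hE.
exists (fun z : {z | R z} => match notF (etrans (esym (hR (val z))) (valP z)) with end).
exists (fun e => match hE e with end).
by split; [case=> z pz; exfalso; move: pz; rewrite hR | move=> e; case: (hE e)].
Qed.

Lemma equipotent_sig_eq T (P Q : pred T) : P =1 Q -> equipotent {x | P x} {x | Q x}.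
Proof.
move=> PQ; have PQ' x : P x -> Q x by rewrite PQ.
apply: (@equipotent_inj_surj _ _ (fun z => exist _ (val z) (PQ' _ (valP z)))).
  by move=> z1 z2 [] /val_inj.
move=> [x qx]; have px : P x by rewrite PQ.
by exists (exist _ x px); apply: val_inj.
Qed.

Lemma equipotent_sig_sum A B (P : pred (A + B)) :
  equipotent {z | P z} ({a | P (inl a)} + {b | P (inr b)}).
Proof.
apply: equipotent_sym.
apply: (@equipotent_inj_surj _ _ (fun z : {a | P (inl a)} + {b | P (inr b)} =>
   match z with inl a => exist P (inl (val a)) (valP a)
              | inr b => exist P (inr (val b)) (valP b) end)).
  by case=> [[a p]|[b p]] [[a' p']|[b' p']] //= [] E; subst;
     rewrite (bool_irrelevance p p').
case=> [[a|b] p]; [exists (inl (exist _ a p)) | exists (inr (exist _ b p))]; exact: val_inj.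
Qed.

Lemma equipotent_sig_sig T (P : pred T) (R : pred {x | P x}) (Q : pred T) :
  (forall z, R z = Q (val z)) -> equipotent {z | R z} {x | P x && Q x}.
Proof.
move=> RQ.
have PQ (z : {z | R z}) : P (val (val z)) && Q (val (val z)).
  by case: z => [[x px] rx] /=; rewrite px -(RQ (exist _ x px)).
apply: (@equipotent_inj_surj _ _ (fun z => exist _ (val (val z)) (PQ z))).
  by move=> z1 z2 [] E; apply/val_inj/val_inj.
move=> [x pq]; case/andP: (pq) => px qx.
have rx : R (exist _ x px) by rewrite RQ.
by exists (exist _ (exist _ x px) rx); apply: val_inj.
Qed.

Lemma equipotent_sig_pair T n (P : pred T) (R : pred ({x | P x} * 'I_n)) (Q : pred T)
    (i0 : 'I_n) :
  (forall z, R z = Q (val z.1) && (z.2 == i0)) -> equipotent {z | R z} {x | P x && Q x}.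
Proof.
move=> RQ.
have PQ (z : {z | R z}) : P (val (val z).1) && Q (val (val z).1).
  by case: z => [[[x px] i] rz] /=; move: rz; rewrite RQ px => /andP[].
apply: (@equipotent_inj_surj _ _ (fun z => exist _ (val (val z).1) (PQ z))).
  move=> [[x i] rz] [[x' i'] rz'] [] /= /val_inj ex; apply: val_inj => /=.
  move: rz rz'; rewrite !RQ /= => /andP[_ /eqP ->] /andP[_ /eqP ->].
  by rewrite ex.
move=> [x pq]; case/andP: (pq) => px qx.
have rx : R (exist _ x px, i0) by rewrite RQ /= qx eqxx.
by exists (exist _ (exist _ x px, i0) rx); apply: val_inj.
Qed.

Lemma equipotent_sig_bij A B (f : A -> B) (P : pred B) :
  bijective f -> equipotent {a | P (f a)} {b | P b}.
Proof.
case=> g fK gK.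
apply: (@equipotent_inj_surj _ _ (fun z : {a | P (f a)} => exist _ (f (val z)) (valP z))).
  by move=> z1 z2 [] /(can_inj fK) /val_inj.
move=> [b pb]; have pa : P (f (g b)) by rewrite gK.
by exists (exist _ (g b) pa); apply: val_inj => /=.
Qed.

(** * Edge multiplicities *)

Definition ext_nz (a : ext) := if a is Fin 0 then false else true.

Lemma ext_nz_Fin0 a : ~~ ext_nz a -> a = Fin 0.
Proof. by case: a => [[|k]|]. Qed.

Lemma edge_count_nz a : ext_nz a -> edge_count a.
Proof. by case: a => [[|k]|] //= _; [exact: ord0 | exact: 0%N]. Qed.

Lemma edge_count0 : edge_count (Fin 0) -> False.
Proof. by case. Qed.

Lemma edge_count1_all_eq (x y : edge_count (Fin 1)) : x = y.
Proof. by apply: val_inj; case: x => [[]] // ?; case: y => [[]]. Qed.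

Lemma equipotent_nat_ord_sum k : equipotent nat ('I_k + nat).
Proof.
apply: (@equipotent_inj_surj _ _
  (fun j => if insub j is Some o then inl o else inr (j - k)%N)).
  move=> j1 j2; case: insubP => [o1 _ e1|h1]; case: insubP => [o2 _ e2|h2] //.
  - by case=> eo; rewrite -e1 -e2 eo.
  - by case; move: h1 h2; rewrite -!leqNgt; lia.
case=> [o|j].
  exists (val o); case: insubP => [o' _ e|]; last by rewrite ltn_ord.
  by congr inl; apply: val_inj.
exists (j + k)%N; case: insubP => [o' h e|h]; last by rewrite addnK.
by move: h; rewrite ltnNge leq_addl.
Qed.

Lemma equipotent_nat_sum : equipotent nat (nat + nat).
Proof.
apply: (@equipotent_inj_surj _ _ (fun j => if odd j then inr j./2 else inl j./2)).
  move=> j1 j2; case o1: (odd j1); case o2: (odd j2) => //= -[] e;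
  by rewrite -[j1]odd_double_half -[j2]odd_double_half o1 o2 e.
case=> j; [exists j.*2 | exists j.*2.+1];
  by rewrite /= ?odd_double ?uphalf_double ?half_double.
Qed.

Lemma edge_count_add a b :
  equipotent (edge_count (ext_add a b)) (edge_count a + edge_count b).
Proof.
case: a => [x|]; case: b => [y|] /=.
- exists (@split x y), (@unsplit x y); split; [exact: splitK | exact: unsplitK].
- exact: equipotent_nat_ord_sum.
- exact: equipotent_trans (equipotent_nat_ord_sum y) (equipotent_sumC _ _).
- exact: equipotent_nat_sum.
Qed.

Lemma ext_add0r a : ext_add a (Fin 0) = a.
Proof. by case: a => //= k; rewrite addn0. Qed.

Lemma ext_add0l a : ext_add (Fin 0) a = a.
Proof. by case: a. Qed.

(** * Fibres of the source and range maps *)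

Definition from_to (G : graph) (x y : gV G) (e : gE G) := (gs e == x) && (gr e == y).
Definition edges_from_to (G : graph) (x y : gV G) := {e : gE G | from_to x y e}.

Lemma from_to_ends (G : graph) (e : gE G) : from_to (gs e) (gr e) e.
Proof. by rewrite /from_to !eqxx. Qed.

Lemma graph_iso_fibres (G H : graph) (fV : gV G -> gV H) : bijective fV ->
  (forall x y, equipotent (edges_from_to x y) (edges_from_to (fV x) (fV y))) ->
  graph_iso G H.
Proof.
case=> gV fVK gVK hfib.
have fibre_bij x y : {fg : (edges_from_to x y -> edges_from_to (fV x) (fV y)) *
                           (edges_from_to (fV x) (fV y) -> edges_from_to x y) |
                      cancel fg.1 fg.2 /\ cancel fg.2 fg.1}.
  apply: constructive_indefinite_description.
  by case: (hfib x y) => f [g h]; exists (f, g).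
pose F x y := (proj1_sig (fibre_bij x y)).1.
pose Gi x y := (proj1_sig (fibre_bij x y)).2.
have FK x y : cancel (F x y) (Gi x y) by rewrite /F /Gi; case: (fibre_bij x y) => fg [].
have GK x y : cancel (Gi x y) (F x y) by rewrite /F /Gi; case: (fibre_bij x y) => fg [].
have from_toH (h : gE H) : from_to (fV (gV (gs h))) (fV (gV (gr h))) h
  by rewrite !gVK from_to_ends.
pose fE e := val (F (gs e) (gr e) (exist _ e (from_to_ends e))).
pose gE h := val (Gi _ _ (exist _ h (from_toH h))).
have fE_ends e : gs (fE e) = fV (gs e) /\ gr (fE e) = fV (gr e).
  by rewrite /fE; case: (F _ _ _) => h /= /andP[/eqP -> /eqP ->].
have gE_ends h : gs (gE h) = gV (gs h) /\ gr (gE h) = gV (gr h).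
  by rewrite /gE; case: (Gi _ _ _) => h' /= /andP[/eqP -> /eqP ->].
exists fV, fE; split; first by exists gV.
split; last by split=> e; case: (fE_ends e).
exists gE => [e|h].
- have key x' y' (w : edges_from_to (fV x') (fV y')) : x' = gs e -> y' = gr e ->
      val w = fE e -> val (Gi x' y' w) = e.
    move=> ex ey ew; subst x' y'.
    have -> : w = F (gs e) (gr e) (exist _ e (from_to_ends e)) by apply: val_inj.
    by rewrite FK.
  by apply: key => //; rewrite ?(proj1 (fE_ends e)) ?(proj2 (fE_ends e)) fVK.
- have key x' y' (w : edges_from_to x' y') : fV x' = gs h -> fV y' = gr h ->
      val w = gE h -> val (F x' y' w) = h.
    move=> ex ey ew.
    have E1 : x' = gV (gs h) by rewrite -ex fVK.
    have E2 : y' = gV (gr h) by rewrite -ey fVK.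
    subst x' y'.
    have -> : w = Gi _ _ (exist _ h (from_toH h)) by apply: val_inj.
    by rewrite GK.
  by apply: key => //; rewrite ?(proj1 (gE_ends h)) ?(proj2 (gE_ends h)) gVK.
Qed.

Lemma graph_iso_refl G : graph_iso G G.
Proof. by exists id, id; split; [exists id | split; [exists id|]]. Qed.

Lemma graph_iso_trans G H K : graph_iso G H -> graph_iso H K -> graph_iso G K.
Proof.
case=> fV [fE [bV [bE [hs hr]]]] [fV' [fE' [bV' [bE' [hs' hr']]]]].
exists (fV' \o fV), (fE' \o fE); split; first exact: bij_comp bV' bV.
split; first exact: bij_comp bE' bE.
by split=> e /=; rewrite ?hs' ?hs ?hr' ?hr.
Qed.

(* [graph_of A] is [count_graph (fun x y => A x y)]; functions rather than
   matrices let the vertex type change under moves. *)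
Definition count_graph (V : finType) (c : V -> V -> ext) : graph :=
  @Graph V {p : V * V & edge_count (c p.1 p.2)} (fun e => (tag e).1) (fun e => (tag e).2).

Section CountGraph.
Variables (V : finType) (c : V -> V -> ext).

Lemma count_graph_fibre_sub (x y : V) (Q : forall p : V * V, edge_count (c p.1 p.2) -> bool) :
  equipotent {e : gE (count_graph c) | from_to (G := count_graph c) x y e && Q (tag e) (tagged e)}
             {q : edge_count (c x y) | Q (x, y) q}.
Proof.
apply: equipotent_sym.
have h (q : {q : edge_count (c x y) | Q (x, y) q}) :
  from_to (G := count_graph c) x y (existT (fun p : V * V => edge_count (c p.1 p.2)) (x, y) (val q))
  && Q (x, y) (val q) by rewrite /from_to /= !eqxx (valP q).
apply: (@equipotent_inj_surj _ _ (fun q =>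
  exist (fun e : gE (count_graph c) =>
           from_to (G := count_graph c) x y e && Q (tag e) (tagged e)) _ (h q))).
  move=> q1 q2 E; have /= E' := f_equal (@proj1_sig _ _) E.
  by apply: val_inj; exact: (inj_pair2_eq_dec _ (@eq_comparable _) _ _ _ _ E').
case=> [[[x' y'] q] pq]; case/andP: (pq) => /andP[/= /eqP ex /eqP ey] qq.
by subst x' y'; exists (exist _ q qq); apply: val_inj.
Qed.

Lemma count_graph_fibre (x y : V) :
  equipotent (edges_from_to (G := count_graph c) x y) (edge_count (c x y)).
Proof.
apply: (@equipotent_trans _ {e : gE (count_graph c) | from_to (G := count_graph c) x y e && true}).
  by apply: equipotent_sig_eq => e; rewrite andbT.
apply: equipotent_trans (count_graph_fibre_sub x y (fun _ _ => true)) _.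
apply: (@equipotent_inj_surj _ _ (fun q : {q : edge_count (c x y) | true} => val q)).
  exact: val_inj.
by move=> q; exists (exist _ q isT).
Qed.

Lemma count_graph_edge x y : ext_nz (c x y) ->
  exists e : gE (count_graph c), gs e = x /\ gr e = y.
Proof.
move=> /edge_count_nz q.
have [e] := equipotent_inhabited (equipotent_sym (count_graph_fibre x y)) q.
by case/andP=> /eqP ex /eqP ey; exists e.
Qed.

Lemma count_graph_from_to_nz (e : gE (count_graph c)) : ext_nz (c (gs e) (gr e)).
Proof.
by case: e => [[x y] q] /=; case: (c x y) q => [[|k]|] //; case.
Qed.

Lemma count_graph_single_out w t : (forall y, c w y = Fin (y == t)) ->
  forall e e' : gE (count_graph c), gs e = w -> gs e' = w -> e = e'.
Proof.
move=> hw.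
have target (e : gE (count_graph c)) : gs e = w -> gr e = t.
  move=> ew; have := count_graph_from_to_nz e.
  by rewrite ew hw; case: (gr e =P t).
move=> e e' ew ew'.
have single : forall q q' : edge_count (c w t), q = q'.
  by rewrite hw eqxx; exact: edge_count1_all_eq.
have := equipotent_all_eq (count_graph_fibre w t) single
   (exist _ e (introT andP (conj (introT eqP ew) (introT eqP (target _ ew)))))
   (exist _ e' (introT andP (conj (introT eqP ew') (introT eqP (target _ ew'))))).
by case.
Qed.

End CountGraph.

Lemma count_graph_iso (V V' : finType) (c : V -> V -> ext) (c' : V' -> V' -> ext) (f : V -> V') :
  bijective f -> (forall x y, c x y = c' (f x) (f y)) ->
  graph_iso (count_graph c) (count_graph c').
Proof.
move=> bf E; apply: (@graph_iso_fibres (count_graph c) (count_graph c') f bf) => x y.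
apply: equipotent_trans (count_graph_fibre _ _ _) _; rewrite E.
exact: equipotent_sym (count_graph_fibre _ _ _).
Qed.
Section SplitFibres.
Variable G : graph.
Variable v : gV G.

Lemma split_vert_inlE n (w : gV G) (i : 'I_n) (x : {x : gV G | x != v}) :
  (split_vert v w i == inl x) = (w == val x).
Proof.
rewrite /split_vert; case: insubP => [w' hw ew|hw] /=.
  by rewrite -ew.
apply/esym/negbTE; apply: contra hw => /eqP ->; exact: (valP x).
Qed.

Lemma split_vert_inrE n (w : gV G) (i j : 'I_n) :
  (split_vert v w i == inr j) = (w == v) && (i == j).
Proof.
rewrite /split_vert; case: insubP => [w' hw ew|hw] /=.
  by rewrite (negbTE hw).
by move: hw; rewrite negbK => ->.
Qed.

Variable n : nat.
Variable p : gE G -> 'I_n.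

Notation OS := (out_split_graph v p).
Notation IS := (in_split_graph v p).

Lemma out_split_fibre_ll (x y : {x : gV G | x != v}) :
  equipotent (edges_from_to (G := OS) (inl x) (inl y)) (edges_from_to (val x) (val y)).
Proof.
apply: equipotent_trans (equipotent_sig_sum _) _.
apply: equipotent_trans (equipotent_sum _ (equipotent_refl _)) _.
  apply: (equipotent_sig_sig (Q := fun e => from_to (val x) (val y) e)).
  by move=> z; rewrite /from_to /= !split_vert_inlE.
apply: equipotent_trans (equipotent_sum_empty _ _) _.
  by move=> [[e i] /=]; rewrite /from_to /= andbF.
apply: equipotent_sig_eq => e; rewrite /from_to.
have hy : val y != v := valP y.
by case: (gr e =P val y) => [->|]; rewrite ?hy ?andbF.
Qed.

Lemma out_split_fibre_lr (x : {x : gV G | x != v}) (i : 'I_n) :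
  equipotent (edges_from_to (G := OS) (inl x) (inr i)) (edges_from_to (val x) v).
Proof.
apply: equipotent_trans (equipotent_sig_sum _) _.
apply: equipotent_trans (equipotent_sumC _ _) _.
apply: equipotent_trans (equipotent_sum _ (equipotent_refl _)) _.
  apply: (@equipotent_sig_pair (gE G) n (fun e => gr e == v) _ (fun e => gs e == val x) i).
  by case=> e j; rewrite /from_to /= split_vert_inlE.
apply: equipotent_trans (equipotent_sum_empty _ _) _.
  case=> a pa; have he : gr (val a) != v := valP a.
  by move: pa; rewrite /from_to /= split_vert_inrE (negbTE he) andbF.
apply: equipotent_sig_eq => e; by rewrite /from_to andbC.
Qed.

Lemma out_split_fibre_rl (j : 'I_n) (y : {x : gV G | x != v}) :
  equipotent (edges_from_to (G := OS) (inr j) (inl y)) {e | from_to v (val y) e && (p e == j)}.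
Proof.
apply: equipotent_trans (equipotent_sig_sum _) _.
apply: equipotent_trans (equipotent_sum _ (equipotent_refl _)) _.
  apply: (equipotent_sig_sig (Q := fun e => from_to v (val y) e && (p e == j))).
  move=> z; rewrite /from_to /= split_vert_inlE split_vert_inrE -!andbA.
  by congr andb; rewrite andbC.
apply: equipotent_trans (equipotent_sum_empty _ _) _.
  by move=> [[e i] /=]; rewrite /from_to /= andbF.
apply: equipotent_sig_eq => e; rewrite /from_to.
have hy : val y != v := valP y.
by case: (gr e =P val y) => [->|]; rewrite ?hy ?andbF.
Qed.

Lemma out_split_fibre_rr (j i : 'I_n) :
  equipotent (edges_from_to (G := OS) (inr j) (inr i)) {e | from_to v v e && (p e == j)}.
Proof.
apply: equipotent_trans (equipotent_sig_sum _) _.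
apply: equipotent_trans (equipotent_sumC _ _) _.
apply: equipotent_trans (equipotent_sum _ (equipotent_refl _)) _.
  apply: (@equipotent_sig_pair (gE G) n (fun e => gr e == v) _
                               (fun e => (gs e == v) && (p e == j)) i).
  by case=> e k; rewrite /from_to /= split_vert_inrE.
apply: equipotent_trans (equipotent_sum_empty _ _) _.
  case=> a pa; have he : gr (val a) != v := valP a.
  by move: pa; rewrite /from_to /= !split_vert_inrE (negbTE he) !andbF.
apply: equipotent_sig_eq => e; rewrite /from_to.
by case: (gr e == v); case: (gs e == v).
Qed.

Lemma in_split_fibre_ll (x y : {x : gV G | x != v}) :
  equipotent (edges_from_to (G := IS) (inl x) (inl y)) (edges_from_to (val x) (val y)).
Proof.
apply: equipotent_trans (equipotent_sig_sum _) _.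
apply: equipotent_trans (equipotent_sum _ (equipotent_refl _)) _.
  apply: (equipotent_sig_sig (Q := fun e => from_to (val x) (val y) e)).
  by move=> z; rewrite /from_to /= !split_vert_inlE.
apply: equipotent_trans (equipotent_sum_empty _ _) _.
  by case=> [[e i] pa]; move: pa; rewrite /from_to /=.
apply: equipotent_sig_eq => e; rewrite /from_to.
have hx : val x != v := valP x.
by case: (gs e =P val x) => [E|]; rewrite ?E ?hx ?andbF.
Qed.

Lemma in_split_fibre_lr (x : {x : gV G | x != v}) (j : 'I_n) :
  equipotent (edges_from_to (G := IS) (inl x) (inr j)) {e | from_to (val x) v e && (p e == j)}.
Proof.
apply: equipotent_trans (equipotent_sig_sum _) _.
apply: equipotent_trans (equipotent_sum _ (equipotent_refl _)) _.
  apply: (equipotent_sig_sig (Q := fun e => from_to (val x) v e && (p e == j))).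
  by move=> z; rewrite /from_to /= split_vert_inlE split_vert_inrE -!andbA.
apply: equipotent_trans (equipotent_sum_empty _ _) _.
  by case=> [[e i] pa]; move: pa; rewrite /from_to /=.
apply: equipotent_sig_eq => e; rewrite /from_to.
have hx : val x != v := valP x.
by case: (gs e =P val x) => [E|]; rewrite ?E ?hx ?andbF.
Qed.

Lemma in_split_fibre_rl (i : 'I_n) (y : {x : gV G | x != v}) :
  equipotent (edges_from_to (G := IS) (inr i) (inl y)) (edges_from_to v (val y)).
Proof.
apply: equipotent_trans (equipotent_sig_sum _) _.
apply: equipotent_trans (equipotent_sumC _ _) _.
apply: equipotent_trans (equipotent_sum _ (equipotent_refl _)) _.
  apply: (@equipotent_sig_pair (gE G) n (fun e => gs e == v) _ (fun e => gr e == val y) i).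
  by case=> e k; rewrite /from_to /= split_vert_inlE andbC.
apply: equipotent_trans (equipotent_sum_empty _ _) _.
  case=> a pa; have he : gs (val a) != v := valP a.
  by move: pa; rewrite /from_to /= split_vert_inrE (negbTE he).
exact: equipotent_refl.
Qed.

Lemma in_split_fibre_rr (i j : 'I_n) :
  equipotent (edges_from_to (G := IS) (inr i) (inr j)) {e | from_to v v e && (p e == j)}.
Proof.
apply: equipotent_trans (equipotent_sig_sum _) _.
apply: equipotent_trans (equipotent_sumC _ _) _.
apply: equipotent_trans (equipotent_sum _ (equipotent_refl _)) _.
  apply: (@equipotent_sig_pair (gE G) n (fun e => gs e == v) _
                               (fun e => (gr e == v) && (p e == j)) i).
  by case=> e k; rewrite /from_to /= split_vert_inrE andbC.
apply: equipotent_trans (equipotent_sum_empty _ _) _.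
  case=> a pa; have he : gs (val a) != v := valP a.
  by move: pa; rewrite /from_to /= split_vert_inrE (negbTE he).
apply: equipotent_sig_eq => e; rewrite /from_to.
by rewrite andbA.
Qed.
End SplitFibres.

Section RGraphFibres.
Variable G : graph.
Variables (u v : gV G) (f : gE G) (hv : v != u) (hf : gr f != u).

Lemma keptE_fibre (Q : pred (gE G)) :
  equipotent {k : keptE u | Q (ke k)} {e | (gs e != u) && (gr e != u) && Q e}.
Proof.
have h (k : {k : keptE u | Q (ke k)}) :
    (gs (ke (val k)) != u) && (gr (ke (val k)) != u) && Q (ke (val k)).
  by case: k => [[e h1 h2] q] /=; rewrite h1 h2 q.
apply: (@equipotent_inj_surj _ _
  (fun k => exist (fun e => (gs e != u) && (gr e != u) && Q e) _ (h k))).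
  move=> [[e1 a1 b1] q1] [[e2 a2 b2] q2] E; have /= E' := f_equal (@proj1_sig _ _) E.
  subst e2; rewrite (bool_irrelevance a1 a2) (bool_irrelevance b1 b2).
  by congr exist; apply: bool_irrelevance.
case=> e pe; case/andP: (pe) => /andP[a b] q.
by exists (exist _ (KeptE a b) q); apply: val_inj.
Qed.

Lemma intoE_fibre : (forall e, gr e = u -> gs e = v) ->
  equipotent {t : intoE u | true} (edges_from_to v u).
Proof.
move=> hs.
have h (t : {t : intoE u | true}) : from_to v u (ie (val t)).
  by case: t => [[e r] _] /=; rewrite /from_to r (hs _ r) !eqxx.
apply: (@equipotent_inj_surj _ _ (fun t => exist (fun e => from_to v u e) _ (h t))).
  move=> [[e1 r1] q1] [[e2 r2] q2] E; have /= E' := f_equal (@proj1_sig _ _) E.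
  subst e2; rewrite (eq_irrelevance r1 r2).
  by congr exist; apply: bool_irrelevance.
case=> e pe; case/andP: (pe) => _ /eqP r.
by exists (exist _ (IntoE r) isT); apply: val_inj.
Qed.

Notation RG := (@R_graph G u v f hv hf).

Lemma R_graph_fibre (x y : {x : gV G | x != u}) :
  equipotent (edges_from_to (G := RG) x y)
        (edges_from_to (val x) (val y) + {t : intoE u | (v == val x) && (gr f == val y)}).
Proof.
apply: equipotent_trans (equipotent_sig_sum _) _.
apply: equipotent_sum.
  apply: equipotent_trans
    (equipotent_sig_eq (Q := fun k : keptE u => from_to (val x) (val y) (ke k)) _) _.
    by move=> k; rewrite /from_to /=.
  apply: equipotent_trans (keptE_fibre _) _.
  apply: equipotent_sig_eq => e; rewrite /from_to.
  have hx : val x != u := valP x; have hy : val y != u := valP y.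
  case: (gs e =P val x) => [E|]; rewrite ?andbF //.
  case: (gr e =P val y) => [E'|]; rewrite ?andbF //.
  by rewrite E E' hx hy.
apply: equipotent_sig_eq => t; by rewrite /from_to /=.
Qed.
End RGraphFibres.

(** * The moves on count graphs *)

Lemma finite_edges_subsingleton (G : graph) (P : gE G -> Prop) :
  (forall e e', P e -> P e' -> e = e') -> finite_edges P.
Proof.
move=> h; case: (classic (exists e, P e)) => [[e0 pe0]|ne].
  by exists 1, (fun _ => e0) => e pe; exists ord0; apply: h.
by exists 0, (fun i : 'I_0 => match notF (ltn_ord i) with end) => e pe; case: ne; exists e.
Qed.

Lemma count_graph_regular (V : finType) (c : V -> V -> ext) w t :
  (forall y, c w y = Fin (y == t)) -> regular (G := count_graph c) w.
Proof.
move=> hw; split.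
  have /count_graph_edge[e [es _]] : ext_nz (c w t) by rewrite hw eqxx.
  by move=> hs; exact: (hs e es).
by case; apply: finite_edges_subsingleton; exact: count_graph_single_out hw.
Qed.

Lemma ord2_cases (i : 'I_2) : i = ord0 \/ i = ord_max.
Proof. by case: i => [[|[|k]] hk] //; [left | right]; apply: val_inj. Qed.

Definition sum_side A B (z : A + B) : 'I_2 := if z is inl _ then ord0 else ord_max.

Lemma sum_side_fibre A B (j : 'I_2) :
  equipotent {z : A + B | sum_side z == j} (if j == ord0 then A else B).
Proof.
case: (ord2_cases j) => ->; rewrite ?eqxx //=.
- apply: (@equipotent_inj_surj _ _ (fun z : {z : A + B | sum_side z == ord0} =>
     match val z as w return sum_side w == ord0 -> A with
     | inl a => fun _ => a | inr b => fun h => match notF h with end end (valP z))).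
    by case=> [[a|b] ha] [[a'|b'] ha'] //= E; apply: val_inj; rewrite /= E.
  by move=> a; exists (exist _ (inl a) (eqxx _)).
- apply: (@equipotent_inj_surj _ _ (fun z : {z : A + B | sum_side z == ord_max} =>
     match val z as w return sum_side w == ord_max -> B with
     | inr b => fun _ => b | inl a => fun h => match notF h with end end (valP z))).
    by case=> [[a|b] ha] [[a'|b'] ha'] //= E; apply: val_inj; rewrite /= E.
  by move=> b; exists (exist _ (inr b) (eqxx _)).
Qed.

(* A decomposition [c = a + b] of the multiplicities lets us label every edge
   of [count_graph c] as coming from [a] (side [ord0]) or from [b] ([ord_max]);
   this labelling is the partition used by the splitting moves. *)
Lemma count_split_bij (V : finType) (c a b : V -> V -> ext) :
  (forall x y, c x y = ext_add (a x y) (b x y)) ->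
  forall pq : V * V,
  {f : edge_count (c pq.1 pq.2) -> edge_count (a pq.1 pq.2) + edge_count (b pq.1 pq.2) |
   bijective f}.
Proof.
move=> hab [x y] /=; apply: constructive_indefinite_description.
have := edge_count_add (a x y) (b x y); rewrite -hab => -[f [g [fK gK]]].
by exists f, g.
Qed.

Section CountSplit.
Variables (V : finType) (c a b : V -> V -> ext).
Hypothesis hab : forall x y, c x y = ext_add (a x y) (b x y).

Definition split_side (e : gE (count_graph c)) :=
  sum_side (proj1_sig (count_split_bij hab (tag e)) (tagged e)).

Lemma split_side_fibre x y (j : 'I_2) :
  equipotent {e : gE (count_graph c) | from_to (G := count_graph c) x y e && (split_side e == j)}
             (edge_count (if j == ord0 then a x y else b x y)).
Proof.
apply: equipotent_trans (count_graph_fibre_sub x y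
  (fun pq q => sum_side (proj1_sig (count_split_bij hab pq) q) == j)) _.
apply: equipotent_trans
  (equipotent_sig_bij (fun z => sum_side z == j) (proj2_sig (count_split_bij hab (x, y)))) _.
by case: (j == ord0) (sum_side_fibre (edge_count (a x y)) (edge_count (b x y)) j).
Qed.

Lemma split_side_edge x y (j : 'I_2) : ext_nz (if j == ord0 then a x y else b x y) ->
  exists e : gE (count_graph c), [/\ gs e = x, gr e = y & split_side e = j].
Proof.
move=> /edge_count_nz q.
have [e] := equipotent_inhabited (equipotent_sym (split_side_fibre x y j)) q.
by case/andP=> /andP[/eqP ex /eqP ey] /eqP ej; exists e.
Qed.

Lemma split_side_single_out u v0 : (forall y, a u y = Fin (y == v0)) ->
  forall e e' : gE (count_graph c), gs e = u -> gs e' = u ->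
  split_side e = ord0 -> split_side e' = ord0 -> e = e'.
Proof.
move=> ha.
have in_fibre (e : gE (count_graph c)) : gs e = u -> split_side e = ord0 ->
    from_to (G := count_graph c) u v0 e && (split_side e == ord0).
  move=> es ep.
  have := equipotent_inhabited (split_side_fibre u (gr e) ord0)
    (exist _ e (introT andP (conj (introT andP (conj (introT eqP es) (eqxx _))) (introT eqP ep)))).
  rewrite eqxx ha; case: (gr e =P v0) => [er _|_]; last by case.
  by rewrite /from_to es er ep !eqxx.
move=> e e' es es' ep ep'.
have single : forall q q' : edge_count (if ord0 == ord0 :> 'I_2 then a u v0 else b u v0), q = q'.
  by rewrite eqxx ha eqxx; exact: edge_count1_all_eq.
have := equipotent_all_eq (split_side_fibre u v0 ord0) single
  (exist _ e (in_fibre e es ep)) (exist _ e' (in_fibre e' es' ep')).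
by case.
Qed.

Definition out_split_count (u : V) (z z' : ({x : V | x != u} + 'I_2)%type) : ext :=
 match z, z' with
 | inl x, inl y => c (val x) (val y)
 | inl x, inr _ => c (val x) u
 | inr j, inl y => if j == ord0 then a u (val y) else b u (val y)
 | inr j, inr _ => if j == ord0 then a u u else b u u end.
Arguments out_split_count : clear implicits.

Definition in_split_count (w : V) (z z' : ({x : V | x != w} + 'I_2)%type) : ext :=
 match z, z' with
 | inl x, inl y => c (val x) (val y)
 | inl x, inr j => if j == ord0 then a (val x) w else b (val x) w
 | inr _, inl y => c w (val y)
 | inr _, inr j => if j == ord0 then a w w else b w w end.
Arguments in_split_count : clear implicits.

Lemma out_split_graph_count u :
  graph_iso (out_split_graph (G := count_graph c) u split_side)
            (count_graph (out_split_count u)).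
Proof.
apply: (@graph_iso_fibres (out_split_graph (G := count_graph c) u split_side)
                          (count_graph (out_split_count u)) id).
  by exists id.
move=> z z'; apply: equipotent_trans _ (equipotent_sym (count_graph_fibre _ _ _)).
case: z => [x|j]; case: z' => [y|i] /=.
- exact: equipotent_trans (@out_split_fibre_ll (count_graph c) u 2 split_side x y)
                          (count_graph_fibre c _ _).
- exact: equipotent_trans (@out_split_fibre_lr (count_graph c) u 2 split_side x i)
                          (count_graph_fibre c _ _).
- exact: equipotent_trans (@out_split_fibre_rl (count_graph c) u 2 split_side j y)
                          (split_side_fibre _ _ _).
- exact: equipotent_trans (@out_split_fibre_rr (count_graph c) u 2 split_side j i)
                          (split_side_fibre _ _ _).
Qed.

Lemma in_split_graph_count w :
  graph_iso (in_split_graph (G := count_graph c) w split_side)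
            (count_graph (in_split_count w)).
Proof.
apply: (@graph_iso_fibres (in_split_graph (G := count_graph c) w split_side)
                          (count_graph (in_split_count w)) id).
  by exists id.
move=> z z'; apply: equipotent_trans _ (equipotent_sym (count_graph_fibre _ _ _)).
case: z => [x|j]; case: z' => [y|i] /=.
- exact: equipotent_trans (@in_split_fibre_ll (count_graph c) w 2 split_side x y)
                          (count_graph_fibre c _ _).
- exact: equipotent_trans (@in_split_fibre_lr (count_graph c) w 2 split_side x i)
                          (split_side_fibre _ _ _).
- exact: equipotent_trans (@in_split_fibre_rl (count_graph c) w 2 split_side j y)
                          (count_graph_fibre c _ _).
- exact: equipotent_trans (@in_split_fibre_rr (count_graph c) w 2 split_side j i)
                          (split_side_fibre _ _ _).
Qed.

Lemma out_split_move u v0 :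
  (forall y, a u y = Fin (y == v0)) -> (exists y, ext_nz (b u y)) ->
  forall H, graph_iso (count_graph (out_split_count u)) H -> move_eq (count_graph c) H.
Proof.
move=> ha [y1 hb] H hH.
apply: me_step; right; right; left.
exists u, 2, split_side.
have [e0 [e0s _ e0p]] :
    exists e : gE (count_graph c), [/\ gs e = u, gr e = v0 & split_side e = ord0].
  by apply: split_side_edge; rewrite eqxx ha eqxx.
have [e1 [e1s _ e1p]] :
    exists e : gE (count_graph c), [/\ gs e = u, gr e = y1 & split_side e = ord_max].
  exact: split_side_edge.
split; first by move=> hs; exact: (hs e0 e0s).
split; first by move=> i; case: (ord2_cases i) => ->; [exists e0 | exists e1].
split; last exact: graph_iso_trans (out_split_graph_count u) hH.
have fin0 : finite_edges (fun e : gE (count_graph c) => gs e = u /\ split_side e = ord0).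
  apply: finite_edges_subsingleton => e e' [es ep] [es' ep'].
  exact: split_side_single_out ha e e' es es' ep ep'.
move=> i j hi hj.
case: (ord2_cases i) => Ei; first by subst i.
by case: (ord2_cases j) => Ej; [subst j | rewrite Ei Ej].
Qed.

Lemma in_split_move w t :
  (forall y, c w y = Fin (y == t)) ->
  (exists x, ext_nz (a x w)) -> (exists x, ext_nz (b x w)) ->
  forall H, graph_iso (count_graph (in_split_count w)) H -> move_eq (count_graph c) H.
Proof.
move=> hw [x0 ha] [x1 hb] H hH.
apply: me_step; right; right; right.
exists w, 2, split_side.
have [e0 [_ e0r e0p]] :
    exists e : gE (count_graph c), [/\ gs e = x0, gr e = w & split_side e = ord0].
  by apply: split_side_edge; rewrite eqxx.
have [e1 [_ e1r e1p]] :
    exists e : gE (count_graph c), [/\ gs e = x1, gr e = w & split_side e = ord_max].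
  exact: split_side_edge.
split; first exact: count_graph_regular hw.
split; first by move=> hs; exact: (hs e0 e0r).
split; first by move=> i; case: (ord2_cases i) => ->; [exists e0 | exists e1].
exact: graph_iso_trans (in_split_graph_count w) hH.
Qed.

End CountSplit.

Arguments out_split_count {V} c a b u z z'.
Arguments in_split_count {V} c a b w z z'.

Definition R_count (V : finType) (c : V -> V -> ext) (u s t : V) (x y : {x : V | x != u}) : ext :=
  ext_add (c (val x) (val y)) (if (s == val x) && (t == val y) then c s u else Fin 0).
Arguments R_count {V} c u s t x y.

Lemma R_move_count (V : finType) (c : V -> V -> ext) u s t (hs : s != u) (ht : t != u) :
  (forall y, c u y = Fin (y == t)) -> (forall x, x != s -> c x u = Fin 0) ->
  forall H, graph_iso (count_graph (R_count c u s t)) H -> move_eq (count_graph c) H.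
Proof.
move=> hu hc H hH.
have /count_graph_edge[f [fs fr]] : ext_nz (c u t) by rewrite hu eqxx.
have hf : gr f != u by rewrite fr.
have hin (e : gE (count_graph c)) : gr e = u -> gs e = s.
  move=> er; apply/eqP; apply: contraT => ne.
  by have := count_graph_from_to_nz e; rewrite er hc.
apply: me_step; right; left.
exists u, s, f, hs, hf.
split; first exact: count_graph_regular hu.
split=> //; split; first by move=> e es; exact: count_graph_single_out hu e f es fs.
split=> //; apply: graph_iso_trans hH.
apply: (@graph_iso_fibres (@R_graph (count_graph c) u s f hs hf)
                          (count_graph (R_count c u s t)) id).
  by exists id.
move=> x y; apply: equipotent_trans _ (equipotent_sym (count_graph_fibre _ _ _)).
apply: equipotent_trans (@R_graph_fibre (count_graph c) u s f hs hf x y) _.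
rewrite /R_count fr; apply: equipotent_trans _ (equipotent_sym (edge_count_add _ _)).
apply: equipotent_sum; first exact: count_graph_fibre.
case: ((s == val x) && (t == val y)).
  exact: equipotent_trans (intoE_fibre hin) (count_graph_fibre _ _ _).
by apply: equipotent_empty => //; exact: edge_count0.
Qed.

(** * Contracting a vertex with a single outgoing edge *)

(* Delete [w], whose only edge goes to [t], and redirect every edge into [w] to [t]. *)
Definition contract_count (V : finType) (c : V -> V -> ext) (w t : V)
    (x y : {x : V | x != w}) : ext :=
  ext_add (c (val x) (val y)) (if val y == t then c (val x) w else Fin 0).
Arguments contract_count {V} c w t x y.

Definition in_nbrs (V : finType) (c : V -> V -> ext) (w : V) := #|[set x | ext_nz (c x w)]|.

Lemma funext2 A B C (f g : A -> B -> C) : (forall x y, f x y = g x y) -> f = g.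
Proof. by move=> h; apply: functional_extensionality => x; apply: functional_extensionality. Qed.

Section Contract.
Variables (V : finType) (c : V -> V -> ext) (w t : V).
Hypotheses (htw : t != w) (hw : forall y, c w y = Fin (y == t)).

Lemma count_ww0 : c w w = Fin 0.
Proof. by rewrite hw eq_sym (negbTE htw). Qed.

Lemma contract_move_single_in_nbr : in_nbrs c w <= 1 ->
  forall H, graph_iso (count_graph (contract_count c w t)) H -> move_eq (count_graph c) H.
Proof.
move=> hn H hH.
case: (pickP [pred x | ext_nz (c x w)]) => [s hs | none].
- have hsw : s != w by apply: contraTneq hs => ->; rewrite /= count_ww0.
  have hc x : x != s -> c x w = Fin 0.
    move=> hx; apply: ext_nz_Fin0; apply: contra hx => hx.
    move: hn => /card_le1_eqP /(_ x s); rewrite !inE => /(_ hx hs) ->.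
    exact: eqxx.
  apply: (R_move_count hsw htw hw hc).
  suff -> : R_count c w s t = contract_count c w t by [].
  apply: funext2 => x y; rewrite /R_count /contract_count; congr ext_add.
  case: (val y =P t) => [->|/eqP ne]; last by rewrite [t == _]eq_sym (negbTE ne) andbF.
  rewrite eqxx andbT.
  by case: (s =P val x) => [->//|/eqP ne]; rewrite hc // eq_sym.
- have hc x : c x w = Fin 0 by apply: ext_nz_Fin0; have /= -> := none x.
  apply: (R_move_count htw htw hw (fun x _ => hc x)).
  suff -> : R_count c w t t = contract_count c w t by [].
  apply: funext2 => x y; rewrite /R_count /contract_count !hc.
  by case: ifP; case: ifP.
Qed.

(* With at least two in-neighbours, in-split [w] so that one copy receives
   exactly the edges from [s0] and remove that copy by an R-move; what is left
   is the same situation with one in-neighbour fewer. *)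
Section PeelInNbr.
Variables s0 s1 : V.
Hypotheses (hs0 : ext_nz (c s0 w)) (hs1 : ext_nz (c s1 w)) (hs01 : s0 != s1).

Definition peel_a x y := if (y == w) && (x != s0) then Fin 0 else c x y.
Definition peel_b x y := if (y == w) && (x != s0) then c x y else Fin 0.

Lemma peel_abE x y : c x y = ext_add (peel_a x y) (peel_b x y).
Proof. by rewrite /peel_a /peel_b; case: ifP; rewrite ?ext_add0l ?ext_add0r. Qed.

Lemma s0_neq_w : s0 != w.
Proof. by apply: contraTneq hs0 => ->; rewrite count_ww0. Qed.

Notation V2 := ({x : V | x != w} + 'I_2)%type.
Let c2 := in_split_count c peel_a peel_b w.
Let w0 : V2 := inr ord0.
Let s0' : V2 := inl (exist _ s0 s0_neq_w).
Let t' : V2 := inl (exist _ t htw).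

Definition peel_count := R_count c2 w0 s0' t'.

Lemma peel_ww : peel_a w w = Fin 0 /\ peel_b w w = Fin 0.
Proof. by rewrite /peel_a /peel_b eqxx /= [w == s0]eq_sym s0_neq_w count_ww0. Qed.

Lemma peel_move : move_eq (count_graph c) (count_graph peel_count).
Proof.
have [haww hbww] := peel_ww.
apply: (@me_trans _ (count_graph c2)).
  apply: (in_split_move peel_abE hw); last exact: graph_iso_refl.
    by exists s0; rewrite /peel_a eqxx eqxx andbF.
  by exists s1; rewrite /peel_b eqxx eq_sym hs01.
apply: (@R_move_count _ c2 w0 s0' t') => //; last exact: graph_iso_refl.
  case=> [y|j] /=; first by rewrite hw.
  by case: ifP => _; rewrite ?haww ?hbww.
case=> [x|j] hx /=; last by rewrite haww.
rewrite /peel_a eqxx /=.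
suff -> : val x != s0 by [].
by apply: contra hx => /eqP E; apply/eqP; congr inl; apply: val_inj.
Qed.

Notation V3 := {z : V2 | z != w0}.
Definition peel_w : V3 := exist (fun z => z != w0) (inr ord_max) isT.
Definition peel_t : V3 := exist (fun z => z != w0) t' isT.

Lemma peel_count_col z : peel_count z peel_w = c2 (val z) (inr ord_max).
Proof. by rewrite /peel_count /R_count andbF ext_add0r. Qed.

Lemma peel_count_w y : peel_count peel_w y = Fin (y == peel_t).
Proof.
have [haww hbww] := peel_ww.
rewrite /peel_count /R_count /= ext_add0r.
case: y => [[y|j] hy] /=; first by rewrite hw.
by case: ifP => _; rewrite ?haww ?hbww.
Qed.

Lemma peel_in_nbrs : in_nbrs peel_count peel_w < in_nbrs c w.
Proof.
have [_ hbww] := peel_ww.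
pose S := [set x | ext_nz (c x w)].
pose g (z : V3) : V := if val z is inl x then val x else w.
have g_in z : ext_nz (peel_count z peel_w) -> g z \in S :\ s0.
  case: z => [[x|j] hz]; rewrite peel_count_col /=; last by rewrite hbww.
  by rewrite /peel_b eqxx /= /g /= !inE; case: ifP.
have g_inj : {in [set z | ext_nz (peel_count z peel_w)] &, injective g}.
  move=> [[x|j] hz] [[x'|j'] hz']; rewrite !inE !peel_count_col /= ?hbww //.
  by move=> _ _ /= E; apply: val_inj => /=; congr inl; exact: val_inj.
rewrite /in_nbrs -(card_in_imset g_inj).
apply: (@leq_ltn_trans #|S :\ s0|).
  apply: subset_leq_card; apply/subsetP => x /imsetP [z hz ->].
  by apply: g_in; rewrite inE in hz.
by rewrite [X in _ < X](cardsD1 s0 S) inE hs0.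
Qed.

Lemma peel_contract_iso :
  graph_iso (count_graph (contract_count peel_count peel_w peel_t))
            (count_graph (contract_count c w t)).
Proof.
pose phi (y : {y : V3 | y != peel_w}) : {x : V | x != w} :=
  if val (val y) is inl x then x else exist _ t htw.
pose psi (x : {x : V | x != w}) : {y : V3 | y != peel_w} :=
  exist (fun y => y != peel_w) (exist (fun z => z != w0) (inl x) isT) isT.
have phiK : cancel phi psi.
  case=> [[[x|j] k1] k2]; first by apply: val_inj; apply: val_inj.
  by case: (ord2_cases j) => Ej; subst j; [move: (k1) | move: (k2)].
apply: (@count_graph_iso _ _ _ _ phi); first by exists psi.
move=> y y'; rewrite -{1}(phiK y) -{1}(phiK y').
move: (phi y) (phi y') => x x'.
rewrite /contract_count /peel_count /R_count /=.
have -> : (s0' == inl x) = (s0 == val x) by [].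
have -> : (t' == inl x') = (val x' == t) by rewrite eq_sym.
have -> : (exist (fun z : V2 => z != w0) (inl x') isT == peel_t) = (val x' == t) by [].
have -> : (t' == inr ord_max) = false by [].
rewrite andbF ext_add0r /peel_a /peel_b !eqxx /=.
case: (val x' == t); last by rewrite andbF !ext_add0r.
rewrite andbT; case: (s0 =P val x) => [<-|/eqP ne]; first by rewrite eqxx /= ext_add0r.
by rewrite eq_sym ne /= ext_add0r.
Qed.

End PeelInNbr.
End Contract.

Arguments peel_w {V w}.

Lemma contract_move (V : finType) (c : V -> V -> ext) (w t : V) : t != w ->
  (forall y, c w y = Fin (y == t)) ->
  forall H, graph_iso (count_graph (contract_count c w t)) H -> move_eq (count_graph c) H.
Proof.
move=> htw hw; move: {2}(in_nbrs c w) (leqnn (in_nbrs c w)) => N.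
elim: N V c w t htw hw => [|N IH] V c w t htw hw hn H hH.
  exact: contract_move_single_in_nbr htw hw (leq_trans hn (leq0n 1)) H hH.
case: (leqP (in_nbrs c w) 1) => h1; first exact: contract_move_single_in_nbr h1 H hH.
move: h1 => /card_gt1P [s0 [s1 [hs0 hs1 hs01]]]; rewrite !inE in hs0 hs1.
apply: me_trans (peel_move htw hw hs0 hs1 hs01) _.
have htw' : peel_t htw != peel_w by [].
apply: (IH _ _ _ _ htw' (peel_count_w htw hw hs0)).
  by rewrite -ltnS; apply: leq_trans (peel_in_nbrs htw hw hs0) hn.
exact: graph_iso_trans (peel_contract_iso htw hw hs0) hH.
Qed.

(** * Adding one column to another *)

(* Column [u] is added to column [v <> u], and entry [(u, v)] loses one edge
   (it equals [k.+1] before the move). *)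
Definition col_add_count (V : finType) (c : V -> V -> ext) (u v : V) (k : nat) (x y : V) : ext :=
  if y == v then ext_add (if x == u then Fin k else c x v) (c x u) else c x y.

(* Out-split [u] into [u0], carrying one edge [u -> v], and [u1], carrying the
   rest; then contract [u0] into [v]: its in-edges are copies of those of [u]. *)
Section ColumnAddition.
Variables (V : finType) (c : V -> V -> ext) (u v : V) (k : nat).
Hypotheses (huv : u != v) (hk : c u v = Fin k.+1).

Definition col_add_a x y := if x == u then Fin (y == v) else c x y.
Definition col_add_b x y := if x == u then (if y == v then Fin k else c x y) else Fin 0.

Lemma col_add_abE x y : c x y = ext_add (col_add_a x y) (col_add_b x y).
Proof.
rewrite /col_add_a /col_add_b; case: (x =P u) => [->|_]; last by rewrite ext_add0r.
by case: (y =P v) => [->|_]; rewrite ?hk ?ext_add0l // /= add1n.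
Qed.

Lemma col_add_a_u y : col_add_a u y = Fin (y == v).
Proof. by rewrite /col_add_a eqxx. Qed.

Lemma col_add_b_uu : col_add_b u u = c u u.
Proof. by rewrite /col_add_b eqxx (negbTE huv). Qed.

Notation V2 := ({x : V | x != u} + 'I_2)%type.
Let c2 := out_split_count c col_add_a col_add_b u.
Let u0 : V2 := inr ord0.
Let v' : V2 := inl (exist _ v (contra_neq esym huv)).

Lemma col_add_u0 y : c2 u0 y = Fin (y == v').
Proof. by case: y => [y|i] /=; rewrite col_add_a_u // (negbTE huv). Qed.

Lemma col_add_contract_iso :
  graph_iso (count_graph (contract_count c2 u0 v')) (count_graph (col_add_count c u v k)).
Proof.
pose phi (z : {z : V2 | z != u0}) : V := if val z is inl x then val x else u.
have hl (x : {x : V | x != u}) : (inl x : V2) != u0 by [].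
pose psi (x : V) : {z : V2 | z != u0} := if insub x is Some x'
  then exist (fun z => z != u0) (inl x') (hl x')
  else exist (fun z => z != u0) (inr ord_max) isT.
have phiK : cancel phi psi.
  case=> [[x|j] hz]; rewrite /phi /psi /=.
    case: insubP => [x' _ ex|]; last by rewrite (valP x).
    by apply: val_inj => /=; congr inl; apply: val_inj.
  case: insubP => [x' hx _|_]; first by rewrite eqxx in hx.
  by apply: val_inj => /=; congr inr; case: (ord2_cases j) => Ej //; rewrite Ej in hz.
apply: (@count_graph_iso _ _ _ _ phi).
  exists psi => // x; rewrite /psi /phi.
  by case: insubP => [x' _ ex|/negPn/eqP ex] /=; rewrite ?ex.
move=> z z'; rewrite -{1}(phiK z) -{1}(phiK z').
move: (phi z) (phi z') => x y.
rewrite /contract_count /col_add_count /psi.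
case: insubP => [x' hx ex|/negPn/eqP ->]; case: insubP => [y' hy ey|/negPn/eqP ->] /=.
- subst x y; have -> : (inl y' == v') = (val y' == v) by [].
  by rewrite (negbTE hx); case: (val y' =P v) => [->|_]; rewrite ?ext_add0r.
- by subst x; rewrite (negbTE huv) ext_add0r.
- subst y; have -> : (inl y' == v') = (val y' == v) by [].
  by rewrite col_add_b_uu /col_add_b eqxx; case: ifP => _; rewrite ?ext_add0r.
- by rewrite col_add_b_uu (negbTE huv) ext_add0r.
Qed.

Lemma col_add_move :
  ext_nz (c u u) -> move_eq (count_graph c) (count_graph (col_add_count c u v k)).
Proof.
move=> hnz.
apply: (@me_trans _ (count_graph c2)).
  apply: (out_split_move col_add_abE col_add_a_u); last exact: graph_iso_refl.
  by exists u; rewrite col_add_b_uu.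
have hvu0 : v' != u0 by [].
exact: contract_move hvu0 col_add_u0 _ col_add_contract_iso.
Qed.

End ColumnAddition.

(** * The matrices [J_nm + C] *)

Definition rows_count (n m : nat) (R : 'I_n -> nat) (x y : 'I_n) : ext :=
  ext_add (Jnm n m x y) (Fin (if x < m then R y else 0)).

Lemma rows_count_lt n m R (x y : 'I_n) : x < m -> rows_count m R x y = Fin ((x == y) + R y).
Proof. by move=> h; rewrite /rows_count mxE h. Qed.

Lemma rows_count_ge n m R (x y : 'I_n) : ~~ (x < m) -> rows_count m R x y = Inf.
Proof. by move=> h; rewrite /rows_count mxE (negbTE h). Qed.

Lemma graph_of_J_add_rows n m (C : 'M[nat]_n) (R : 'I_n -> nat) :
  (forall x y : 'I_n, x < m -> C x y = R y) -> (forall x y : 'I_n, m <= x -> C x y = 0) ->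
  graph_of (ext_addmx (Jnm n m) (ext_of_mx C)) = count_graph (rows_count m R).
Proof.
move=> hlt hge; congr count_graph; apply: funext2 => x y.
rewrite /rows_count /ext_addmx /ext_of_mx !mxE.
by case: ifP => xm; [rewrite hlt | rewrite hge // leqNgt xm].
Qed.

Lemma rows_count_add_move n m (R : 'I_n -> nat) (o y : 'I_n) :
  o < m -> o != y -> 0 < R y ->
  move_eq (count_graph (rows_count m R))
          (count_graph (rows_count m (fun z => if z == y then R y + R o else R z))).
Proof.
move=> om oy Ry.
have hk : rows_count m R o y = Fin (R y).-1.+1 by rewrite rows_count_lt // (negbTE oy) prednK.
have hnz : ext_nz (rows_count m R o o) by rewrite rows_count_lt // eqxx.
suff <- : col_add_count (rows_count m R) o y (R y).-1 =
          rows_count m (fun z => if z == y then R y + R o else R z).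
  exact: col_add_move oy hk hnz.
apply: funext2 => x z; rewrite /col_add_count.
case: (z =P y) => [->|/eqP zy]; last by rewrite /rows_count (negbTE zy).
case: (boolP (x < m)) => xm; last by rewrite !rows_count_ge //; case: ifP.
rewrite !rows_count_lt // eqxx; case: (x =P o) => [->|/eqP xo] /=.
  by rewrite ?eqxx (negbTE oy); congr Fin; lia.
by congr Fin; lia.
Qed.

(* Undo [rows_count_add_move] at an entry of [R] exceeding [d], by induction on the sum of [R]. *)
Lemma rows_count_reduce n m (o : 'I_n) (d : nat) : o < m ->
  forall R : 'I_n -> nat, R o = d -> (forall y, 0 < R y) -> (forall y, d %| R y) ->
  move_eq (count_graph (rows_count m (fun _ : 'I_n => d))) (count_graph (rows_count m R)).
Proof.
move=> om R; have [N] : exists N, \sum_(y : 'I_n) R y <= N by exists (\sum_(y : 'I_n) R y).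
elim: N R => [|N IH] R hs Ro R_gt0 dR.
  have /(_ o) := R_gt0; move: hs; rewrite (bigD1 o) //=; lia.
case: (boolP [forall y, R y <= d]) => [/forallP hall | /forallPn [y]].
  have -> : R = (fun _ => d).
    apply: functional_extensionality => y; apply/eqP; rewrite eqn_leq hall /=.
    by apply: dvdn_leq (R_gt0 y) (dR y).
  exact: me_refl.
rewrite -ltnNge => hy.
have oy : o != y by apply: contraTneq hy => <-; rewrite Ro ltnn.
have d2 : d + d <= R y.
  case/dvdnP: (dR y) hy => q ->; rewrite addnn -mul2n.
  by case: q => [|[|q]]; rewrite ?mul0n ?mul1n ?ltnn ?ltn0 // => _; rewrite leq_mul2r orbT.
pose R' z := if z == y then R y - d else R z.
have R'o : R' o = d by rewrite /R' (negbTE oy).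
have R'_gt0 z : 0 < R' z by rewrite /R'; case: ifP => // _; move: d2 (R_gt0 o); rewrite Ro; lia.
have dR' z : d %| R' z by rewrite /R'; case: ifP => // _; exact: dvdn_sub.
have hs' : \sum_z R' z <= N.
  move: hs; rewrite (bigD1 y) //= [X in _ -> X <= _](bigD1 y) //=.
  rewrite [in X in _ -> X <= _](eq_bigr R) => [|z /negbTE zy]; last by rewrite /R' zy.
  rewrite /R' eqxx; move: d2 (R_gt0 o); rewrite Ro; lia.
apply: me_trans (IH R' hs' R'o R'_gt0 dR') _.
have -> : R = fun z => if z == y then R' y + R' o else R' z.
  apply: functional_extensionality => z; rewrite R'o /R'.
  by case: (z =P y) => [->|//]; rewrite eqxx; move: d2; lia.
exact: rows_count_add_move om oy (R'_gt0 y).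
Qed.

Section RankOne.
Import GRing.Theory Num.Theory.
Local Open Scope ring_scope.

Lemma rank1_row_eq n (C : 'M[nat]_n) (o x : 'I_n) :
  C o o != 0%N -> C x o = C o o ->
  \rank (map_mx (fun k : nat => (k%:R : rat)) C) = 1%N -> forall y, C x y = C o y.
Proof.
move=> Coo0 Cxo hr y.
set M := map_mx (fun k : nat => (k%:R : rat)) C.
have row_o_nz : row o M != 0.
  by apply/eqP => /matrixP /(_ 0 o); rewrite !mxE => /eqP; rewrite pnatr_eq0 (negbTE Coo0).
have row_o_full : (M <= row o M)%MS.
  have := (mxrank_leqif_eq (row_sub o M)).2.
  by rewrite rank_rV row_o_nz hr eqxx => /esym /andP [].
have /submxP [D hD] : (row x M <= row o M)%MS by apply: submx_trans (row_sub x M) row_o_full.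
have E z : M x z = D 0 0 * M o z.
  by have := congr1 (fun A : 'M[rat]_(1, n) => A 0 z) hD; rewrite !mxE big_ord1 !mxE.
have D1 : D 0 0 = 1.
  have := E o; rewrite /M !mxE Cxo => /esym.
  by rewrite -[X in _ = X]mul1r => /mulIf; apply; rewrite pnatr_eq0.
by have := E y; rewrite D1 mul1r /M !mxE => /eqP; rewrite eqr_nat => /eqP.
Qed.

End RankOne.

Lemma gcd_nz_dvd n (C : 'M[nat]_n) i j : C i j != 0 -> gcd_nz C %| C i j.
Proof. by move=> hij; rewrite /gcd_nz (bigD1 (i, j)) //=; exact: dvdn_gcdl. Qed.

Theorem lemma8p4 (n m : nat) (C : 'M[nat]_n) :
  (m <= n)%N ->
  (forall i j : 'I_n, (i < m)%N -> C i j != 0%N) ->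
  (forall i j : 'I_n, (m <= i)%N -> C i j = 0%N) ->
  (forall i j : 'I_n, nat_of_ord j = 0%N ->
      C i j = (if (i < m)%N then gcd_nz C else 0%N)) ->
  \rank (map_mx (fun k : nat => (k%:R : rat)) C) = 1%N ->
  move_eq (graph_of (ext_addmx (Jnm n m) (ext_of_mx C)))
          (graph_of (ext_addmx (Jnm n m) (ext_of_mx (Dmx n m (gcd_nz C))))).
Proof.
move=> hmn C_nz C_zero C_col0 hr; set d := gcd_nz C.
have [m0|m_gt0] := posnP m.
  have -> : C = Dmx n m d by apply/matrixP => i j; rewrite !mxE C_zero ?m0.
  exact: me_refl.
pose o : 'I_n := Ordinal (leq_trans m_gt0 hmn).
have om : o < m by [].
have Cxo (x : 'I_n) : x < m -> C x o = d by move=> xm; rewrite C_col0 // xm.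
have rowsC (x y : 'I_n) : x < m -> C x y = C o y.
  by move=> xm; apply: rank1_row_eq => //; [exact: C_nz | rewrite !Cxo].
have D_rows (x y : 'I_n) : x < m -> Dmx n m d x y = d by rewrite mxE => ->.
have D_zero (x y : 'I_n) : m <= x -> Dmx n m d x y = 0 by rewrite mxE leqNgt => /negbTE ->.
rewrite (graph_of_J_add_rows rowsC C_zero) (graph_of_J_add_rows D_rows D_zero).
apply: me_sym; apply: rows_count_reduce om _ (Cxo o om) _ _ => y.
  by rewrite lt0n C_nz.
by apply: gcd_nz_dvd; exact: C_nz.
Qed.
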